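(* Let $(\mathcal{M},\mathrm{dist})$ be a metric space, $\mathcal{F}\subset2^{\mathcal{M}}$, and $J:\mathcal{M}\to\mathbb{R}\cup\{+\infty\}$ lower semi-continuous, with $c=\inf_{A\in\mathcal{F}}\sup_{x\in A}J(x)\in\mathbb{R}$. Assume (F1) every $A\in\mathcal{F}$ is closed in $\mathcal{M}$, and (F2) there is $c'>c$ such that for every sequence $(A_n)\subset\mathcal{F}$ with $A_n\subset\mathcal{M}^{c'}$ for all $n$, $\limsup_nA_n\in\mathcal{F}$. Let $\eta:\mathcal{M}^{c'}\to\mathcal{M}^{c'}$ satisfy ($\eta$1) $\eta(A)\in\mathcal{F}$ whenever $A\in\mathcal{F}$ and $A\subset\mathcal{M}^{c'}$, and ($\eta$2) $J(\eta(x))\le J(x)$ for all $x\in\mathcal{M}^{c'}$. Suppose $(J,\eta)$ satisfies $(PS)_c$. Then for every $A\in\mathcal{F}$ with $\sup_AJ=c$ there exists $\bar x\in A\cap\mathcal{K}_c$; in particular $\mathcal{K}_c\neq\emptyset$.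
   Context: $\mathcal{M}^{c'}=\{x\in\mathcal{M}:J(x)\le c'\}$. For sets $A_n\subset\mathcal{M}$, $\limsup_nA_n$ is the set of $x$ such that for some $n_j\to\infty$ there are $x_{n_j}\in A_{n_j}$ with $x_{n_j}\to x$. $\mathcal{K}_c=\{x\in\mathcal{M}:J(x)=J(\eta(x))=c\}$. $(J,\eta)$ satisfies $(PS)_c$ if for every sequence $(x_n)\subset\mathcal{M}$ with $J(x_n)\to c$ and $J(\eta(x_n))\to c$ (so $\eta(x_n)$ is defined for $n$ large) there is $\bar x\in\mathcal{K}_c$ such that, up to a subsequence, $x_n\to\bar x$. *)

From HB Require Import structures.
From mathcomp Require Import all_boot all_order all_algebra.
From mathcomp Require Import all_classical all_reals all_analysis.
Set Implicit Arguments. Unset Strict Implicit. Unset Printing Implicit Defensive.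
Import Order.TTheory GRing.Theory Num.Theory.
Local Open Scope classical_set_scope.
Local Open Scope ring_scope.

Definition is_metric (R : realType) (M : Type) (dist : M -> M -> R) : Prop :=
  (forall x y, dist x y = 0 <-> x = y) /\
  (forall x y, dist x y = dist y x) /\
  (forall x y z, dist x z <= dist x y + dist y z).

Definition mconv (R : realType) (M : Type) (dist : M -> M -> R)
  (u : nat -> M) (x : M) : Prop :=
  forall e : R, 0 < e -> exists N : nat, forall n, (N <= n)%N -> dist (u n) x < e.

Definition mclosed (R : realType) (M : Type) (dist : M -> M -> R) (A : set M) : Prop :=
  forall x, ~ A x -> exists e : R, 0 < e /\ forall y, dist x y < e -> ~ A y.

Definition mlsc (R : realType) (M : Type) (dist : M -> M -> R) (J : M -> \bar R) : Prop :=
  forall x (t : R), (t%:E < J x)%E ->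
    exists d : R, 0 < d /\ forall y, dist x y < d -> (t%:E < J y)%E.

Definition sublevel (R : realType) (M : Type) (J : M -> \bar R) (c' : R) : set M :=
  [set x | (J x <= c'%:E)%E].

(* limsup of a sequence of sets: x such that for some n_j -> oo there are
   x_{n_j} in A_{n_j} with x_{n_j} -> x *)
Definition setlimsup (R : realType) (M : Type) (dist : M -> M -> R)
  (A : nat -> set M) : set M :=
  [set x | exists (nj : nat -> nat) (y : nat -> M),
     (forall N : nat, exists j0 : nat, forall j, (j0 <= j)%N -> (N <= nj j)%N) /\
     (forall j, A (nj j) (y j)) /\ mconv dist y x].

Definition Kc (R : realType) (M : Type) (J : M -> \bar R) (eta : M -> M) (c : R) : set M :=
  [set x | J x = c%:E /\ J (eta x) = c%:E].

Definition econv (R : realType) (u : nat -> \bar R) (l : R) : Prop :=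
  u @ \oo --> l%:E.

Definition PS (R : realType) (M : Type) (dist : M -> M -> R) (J : M -> \bar R)
  (eta : M -> M) (c : R) : Prop :=
  forall x : nat -> M,
    econv (fun n => J (x n)) c -> econv (fun n => J (eta (x n))) c ->
    exists xbar, Kc J eta c xbar /\
      exists phi : nat -> nat, (forall n, (phi n < phi n.+1)%N) /\
        mconv dist (fun n => x (phi n)) xbar.

Definition minimax (R : realType) (M : Type) (F : set (set M)) (J : M -> \bar R) : \bar R :=
  ereal_inf [set ereal_sup (J @` A) | A in F].

From HB Require Import structures.
From mathcomp Require Import all_boot all_order all_algebra.
From mathcomp Require Import all_classical all_reals all_analysis.
From mathcomp Require Import lra.
Import Order.TTheory GRing.Theory Num.Theory.
Local Open Scope classical_set_scope.
Local Open Scope ring_scope.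

(* Since [eta] maps [A] into [F] without raising [J], [sup J(eta A) >= c], so
   one finds [x_n] in [A] with [c - 1/(n+1) < J(eta x_n) <= J(x_n) <= c]. This is a
   (PS)_c sequence; a subsequence converges to a point of K_c, which lies in
   [A] because [A] is closed. *)

Lemma cvge_sub_harmonic {R : realType} (c : R) :
  (fun n : nat => (c - harmonic n)%:E) @ \oo --> c%:E.
Proof.
apply: cvg_EFin; first exact: nearW.
have cvg_sub : (fun n : nat => c - harmonic n) @ \oo --> c - 0.
  by apply: cvgB; [exact: cvg_cst | exact: cvg_harmonic].
by rewrite subr0 in cvg_sub.
Qed.

Lemma econv_squeeze_harmonic {R : realType} (c : R) (u : nat -> \bar R) :
  (forall n, ((c - harmonic n)%:E <= u n <= c%:E)%E) -> econv u c.
Proof.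
move=> u_bounds; have u_bounds_near : \forall n \near \oo,
    ((c - harmonic n)%:E <= u n <= c%:E)%E by exact: nearW.
rewrite /econv.
exact: (squeeze_cvge u_bounds_near (cvge_sub_harmonic c) (cvg_cst _)).
Qed.

Lemma mclosed_mconv {R : realType} {M : Type} {dist : M -> M -> R}
    {A : set M} {u : nat -> M} {x : M} :
  (forall x y, dist x y = dist y x) ->
  mclosed dist A -> (forall n, A (u n)) -> mconv dist u x -> A x.
Proof.
move=> dist_sym A_closed Au u_x; apply: contrapT => notAx.
have [e [e_gt0 ball_notA]] := A_closed x notAx.
have [N uN_x] := u_x e e_gt0.
by apply: (ball_notA (u N)) (Au N); rewrite dist_sym; exact: uN_x.
Qed.

Lemma minimax_le_sup {R : realType} {M : Type} (F : set (set M))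
    (J : M -> \bar R) (B : set M) :
  F B -> (minimax F J <= ereal_sup (J @` B))%E.
Proof. by move=> FB; apply: ereal_inf_lbound; exists B. Qed.

Lemma exists_gt_sub_harmonic {R : realType} {T : Type} {f : T -> \bar R}
    {B : set T} {c : R} :
  (c%:E <= ereal_sup (f @` B))%E ->
  forall n, exists x, B x /\ ((c - harmonic n)%:E < f x)%E.
Proof.
move=> c_le_sup n.
have : ((c - harmonic n)%:E < ereal_sup (f @` B))%E.
  apply: lt_le_trans c_le_sup; rewrite lte_fin.
  by have := harmonic_gt0 (R := R) n; lra.
by case/ereal_sup_gt => _ [x Bx <-] lt_fx; exists x.
Qed.

Theorem theorem2p4 (R : realType) (M : Type) (dist : M -> M -> R)
  (F : set (set M)) (J : M -> \bar R) (eta : M -> M) (c c' : R) :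
  is_metric dist ->
  mlsc dist J ->
  minimax F J = c%:E ->
  (* (F1) *)
  (forall A, F A -> mclosed dist A) ->
  (* (F2) *)
  c < c' ->
  (forall A : nat -> set M, (forall n, F (A n)) ->
     (forall n, A n `<=` sublevel J c') -> F (setlimsup dist A)) ->
  (* eta : M^{c'} -> M^{c'} *)
  (forall x, sublevel J c' x -> sublevel J c' (eta x)) ->
  (* (eta1) *)
  (forall A, F A -> A `<=` sublevel J c' -> F (eta @` A)) ->
  (* (eta2) *)
  (forall x, sublevel J c' x -> (J (eta x) <= J x)%E) ->
  PS dist J eta c ->
  forall A, F A -> ereal_sup (J @` A) = c%:E ->
    (exists xbar, A xbar /\ Kc J eta c xbar) /\ Kc J eta c !=set0.
Proof.
move=> [_ [dist_sym _]] _ minimax_c F_closed lt_cc' _ _ F_eta J_eta PS_c A FA supA.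
have J_le_c x : A x -> (J x <= c%:E)%E.
  by move=> Ax; rewrite -supA; apply: ereal_sup_ubound; exists x.
have A_sub : A `<=` sublevel J c'.
  by move=> x /J_le_c Jx; apply: le_trans Jx _; rewrite lee_fin ltW.
have c_le_sup_eta : (c%:E <= ereal_sup ((J \o eta) @` A))%E.
  by rewrite -minimax_c -image_comp; apply/minimax_le_sup/F_eta.
have [x /all_and2[Ax Jeta_x]] := choice (exists_gt_sub_harmonic c_le_sup_eta).
have Jeta_le_J n : (J (eta (x n)) <= J (x n))%E by exact/J_eta/A_sub.
have [xb [Kxb [phi [_ cvg_phi]]]] : exists xbar, Kc J eta c xbar /\
    exists phi : nat -> nat, (forall n, (phi n < phi n.+1)%N) /\
      mconv dist (fun n => x (phi n)) xbar.
  apply: PS_c; apply: econv_squeeze_harmonic => n.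
    by rewrite J_le_c // andbT; apply: le_trans (Jeta_le_J n); exact: ltW.
  by rewrite (ltW (Jeta_x n)) /=; apply: le_trans (Jeta_le_J n) _; exact: J_le_c.
have Axb : A xb by apply: (mclosed_mconv dist_sym (F_closed A FA) _ cvg_phi).
by split; exists xb.
Qed.
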